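(* Let $G$ be a Polish group and let $\varphi,\psi\colon G \to [0,\infty]$ be arbitrary functions. Then for every $g \in G$, \[ (\varphi \diamond \psi)(g) \leq (U(\varphi) \diamond U(\psi))(g). \]
   Context: For functions $\varphi,\psi\colon G \to [0,\infty]$, define $(\varphi \diamond \psi)(x) = \inf_{h \in G} \bigl(\varphi(h) + \psi(h^{-1}x)\bigr)$. For $\varphi\colon G\to[0,\infty]$, $U(\varphi)$ denotes the pointwise infimum of all upper semi-continuous functions $\psi\colon G \to [0,\infty]$ such that the set $\{x \colon \varphi(x) > \psi(x)\}$ is meagre in $G$. *)

From HB Require Import structures.
From mathcomp Require Import all_boot all_order all_algebra.
From mathcomp Require Import monoid.
From mathcomp Require Import all_classical all_reals topology ereal.
Import Order.TTheory GRing.Theory Num.Theory.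

Set Implicit Arguments.
Unset Strict Implicit.
Unset Printing Implicit Defensive.

Local Open Scope classical_set_scope.
Local Open Scope ring_scope.

(* A group carrying a topology (the topological-group axioms are stated in
   [topological_group] below). *)
HB.structure Definition TopGroupT := {G of Group G & Topological G}.
Notation topGroupType := TopGroupT.type.

Definition topological_group (G : topGroupType) : Prop :=
  continuous (fun p : G * G => (p.1 * p.2)%g) /\
  continuous (fun x : G => (x^-1)%g).

Definition separable_space (T : topologicalType) : Prop :=
  exists D : set T, countable D /\ dense D.

Definition completely_metrizable (R : realType) (T : topologicalType) : Prop :=
  exists d : T -> T -> R,
    [/\ (forall x y, 0 <= d x y) /\ (forall x y, d x y = 0 <-> x = y),
        (forall x y, d x y = d y x),
        (forall x y z, d x z <= d x y + d y z),
        (forall (x : T) (A : set T),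
            nbhs x A <-> exists2 e : R, 0 < e & [set y | d x y < e] `<=` A) &
        (forall u : nat -> T,
            (forall e : R, 0 < e -> exists N : nat, forall m n : nat,
                 (N <= m)%N -> (N <= n)%N -> d (u m) (u n) < e) ->
            exists l : T, u @ \oo --> l)].

Definition polish_space (R : realType) (T : topologicalType) : Prop :=
  separable_space T /\ completely_metrizable R T.

Definition polish_group (R : realType) (G : topGroupType) : Prop :=
  topological_group G /\ polish_space R G.

Definition nowhere_dense (T : topologicalType) (A : set T) : Prop :=
  (closure A)° = set0.

Definition meagre (T : topologicalType) (A : set T) : Prop :=
  exists F : nat -> set T,
    (forall n, nowhere_dense (F n)) /\ A `<=` \bigcup_n F n.

Local Open Scope ereal_scope.

Definition upper_semicontinuous (R : realType) (T : topologicalType)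
    (f : T -> \bar R) : Prop :=
  forall a : R, open [set x | f x < a%:E].

Definition diamond (R : realType) (G : topGroupType) (phi psi : G -> \bar R)
    (x : G) : \bar R :=
  ereal_inf [set phi h + psi (h^-1 * x)%g | h in [set: G]].

Definition Uenv (R : realType) (G : topGroupType) (phi : G -> \bar R)
    (x : G) : \bar R :=
  ereal_inf [set psi x | psi in
    [set psi : G -> \bar R |
       (forall y, 0 <= psi y) /\ upper_semicontinuous psi /\
       meagre [set y | psi y < phi y]]].

(* Fix h in G and usc functions p >= phi, q >= psi off meagre sets.  For e > 0
   the set W of x with p x < p h + e and q (x^-1 g) < q (h^-1 g) + e is open
   and contains h, while the x with phi x > p x or psi (x^-1 g) > q (x^-1 g)
   form a meagre set, since x |-> x^-1 g is a homeomorphism.  By the Baire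
   category theorem W contains a point y outside that meagre set, so
   (phi <> psi)(g) <= phi y + psi (y^-1 g) <= p h + q (h^-1 g) + 2e.  Taking
   infima over p, q and h gives the claim. *)

From HB Require Import structures.
From mathcomp Require Import all_boot all_order all_algebra.
From mathcomp Require Import monoid.
From mathcomp Require Import all_classical all_reals topology ereal.
From mathcomp Require Import lra.
Import Order.TTheory GRing.Theory Num.Theory.

Local Open Scope classical_set_scope.
Local Open Scope ring_scope.

Section complete_metric.
Variables (R : realType) (T : topologicalType) (d : T -> T -> R).
Hypothesis d_eq0 : forall x y, d x y = 0 <-> x = y.
Hypothesis d_sym : forall x y, d x y = d y x.
Hypothesis d_triangle : forall x y z, d x z <= d x y + d y z.
Hypothesis nbhs_d : forall (x : T) (A : set T),
  nbhs x A <-> exists2 e : R, 0 < e & [set y | d x y < e] `<=` A.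
Hypothesis d_complete : forall u : nat -> T,
  (forall e : R, 0 < e -> exists N : nat, forall m n : nat,
     (N <= m)%N -> (N <= n)%N -> d (u m) (u n) < e) ->
  exists l : T, u @ \oo --> l.

Let ball x r := [set y | d x y < r].

Lemma ball_open x r : open (ball x r).
Proof.
rewrite openE /ball => y /= dxy; apply/nbhs_d.
exists (r - d x y); first by rewrite subr_gt0.
by move=> z /= dyz; have := d_triangle x y z; lra.
Qed.

Lemma ball_center x {r} : 0 < r -> ball x r x.
Proof. by rewrite /ball /= (proj2 (d_eq0 x x) erefl). Qed.

Lemma ball_avoid_nowhere_dense {F : set T} {x r} (n : nat) :
  nowhere_dense F -> 0 < r ->
  exists y r', [/\ 0 < r', r' <= n.+1%:R^-1 &
    ball y (2 * r') `<=` ball x r `&` ~` closure F].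
Proof.
move=> ndF r_gt0.
have [y [bxy Fy]] : exists y, ball x r y /\ ~ closure F y.
  apply: contrapT => noy.
  suff : (closure F)° x by rewrite ndF.
  have := ball_open x r; rewrite openE => /(_ x (ball_center x r_gt0)).
  by apply: filterS => y bxy; apply: contrapT => Fy; apply: noy; exists y.
have : open (ball x r `&` ~` closure F).
  by apply: openI; [exact: ball_open | exact/closed_openC/closed_closure].
rewrite openE => /(_ y (conj bxy Fy)) /nbhs_d [e e_gt0 sub].
exists y, (Num.min (e / 2) n.+1%:R^-1); split.
- by rewrite lt_min divr_gt0 //= invr_gt0.
- by rewrite ge_min lexx orbT.
- move=> z; rewrite /ball /= => dyz; apply: sub => /=.
  have : Num.min (e / 2) n.+1%:R^-1 <= e / 2 by rewrite ge_min lexx.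
  lra.
Qed.

Section nested_balls.
Variables (c : nat -> T) (r : nat -> R).
Hypothesis r_gt0 : forall n, 0 < r n.
Hypothesis r_small : forall n, r n.+1 <= n.+1%:R^-1.
Hypothesis ball_nested : forall n, ball (c n.+1) (2 * r n.+1) `<=` ball (c n) (r n).

Lemma nested_center_dist {n m} : (n <= m)%N -> d (c n) (c m) < r n.
Proof.
suff sub : (n <= m)%N -> ball (c m) (r m) `<=` ball (c n) (r n).
  by move/sub; apply; exact: ball_center.
elim: m => [|m IH]; first by rewrite leqn0 => /eqP->.
rewrite leq_eqVlt => /orP[/eqP->//|]; rewrite ltnS => /IH sub x bx.
by apply/sub/ball_nested; rewrite /ball /= in bx *; have := r_gt0 m.+1; lra.
Qed.

Lemma nested_centers_cauchy (e : R) : 0 < e -> exists N : nat,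
  forall m n : nat, (N <= m)%N -> (N <= n)%N -> d (c m) (c n) < e.
Proof.
move=> e_gt0; have [K Ke] := ltr_add_invr (divr_gt0 e_gt0 (ltr0Sn R 1)).
exists K.+1 => m n Km Kn.
have := d_triangle (c m) (c K.+1) (c n); rewrite [d (c m) (c K.+1)]d_sym.
have := nested_center_dist Km; have := nested_center_dist Kn.
have rK : r K.+1 < e / 2 by rewrite add0r in Ke; exact: le_lt_trans (r_small K) Ke.
lra.
Qed.

Lemma nested_balls_limit : exists l, forall n, d (c n) l <= r n.
Proof.
have [l cl] := @d_complete c nested_centers_cauchy.
exists l => n; apply/ler_addgt0Pr => e e_gt0.
have ball_l : nbhs l (ball l e) by apply/nbhs_d; exists e.
have [N _ near_l] := cl _ ball_l.
have := nested_center_dist (leq_maxl n N); have := near_l _ (leq_maxr n N).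
by have := d_triangle (c n) (c (maxn n N)) l; rewrite /ball /= (d_sym l); lra.
Qed.

End nested_balls.

Theorem metric_baire (F : nat -> set T) (W : set T) (x : T) :
  (forall n, nowhere_dense (F n)) -> open W -> W x ->
  exists2 y, W y & forall n, ~ F n y.
Proof.
move=> ndF oW Wx.
have [r0 r0_gt0 sub0] := proj1 (nbhs_d x W) (open_nbhs_nbhs (conj oW Wx)).
have next (nb : nat * (T * R)) : exists b : T * R, 0 < nb.2.2 ->
    [/\ 0 < b.2, b.2 <= nb.1.+1%:R^-1 &
     ball b.1 (2 * b.2) `<=` ball nb.2.1 nb.2.2 `&` ~` closure (F nb.1)].
  case: nb => n [y r]; have [r_gt0|r_le0] := ltP 0 r.
    have [z [r' ?]] := ball_avoid_nowhere_dense (x := y) n (ndF n) r_gt0.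
    by exists (z, r').
  by exists (y, r) => /=; rewrite ltNge r_le0.
have [f fP] := choice next.
pose s := fix s n := if n is m.+1 then f (m, s m) else (x, r0).
have s_gt0 n : 0 < (s n).2 by elim: n => [|n IH] //=; case: (fP (n, s n) IH).
have sP n := fP (n, s n) (s_gt0 n).
have [l sl] := @nested_balls_limit (fun n => (s n).1) (fun n => (s n).2) s_gt0
  (fun n => let: And3 _ r_small _ := sP n in r_small)
  (fun n z bz => proj1 ((let: And3 _ _ sub := sP n in sub) z bz)).
have in_step n : (ball (s n).1 (s n).2 `&` ~` closure (F n)) l.
  case: (sP n) => r_gt0 _; apply; rewrite /ball /=; have := sl n.+1; lra.
exists l; first by apply: sub0; case: (in_step 0%N).
by move=> n Fl; case: (in_step n) => _; apply; exact: subset_closure.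
Qed.

End complete_metric.

Lemma completely_metrizable_meagre_compl {R : realType} {T : topologicalType}
    {M W : set T} {x : T} :
  completely_metrizable R T -> meagre M -> open W -> W x ->
  exists2 y, W y & ~ M y.
Proof.
move=> [d [[_ d_eq0] d_sym d_triangle nbhs_d d_complete]] [F [ndF MF]] oW Wx.
have [y Wy notF] := @metric_baire _ _ d d_eq0 d_sym d_triangle nbhs_d
  d_complete _ _ _ ndF oW Wx.
by exists y => // /MF [n _]; exact: notF.
Qed.

Lemma meagreU {T : topologicalType} {A B : set T} :
  meagre A -> meagre B -> meagre (A `|` B).
Proof.
move=> [FA [ndA AF]] [FB [ndB BF]].
exists (fun n => if odd n then FA n./2 else FB n./2); split.
  by move=> n; case: odd.
move=> x [/AF [n _ Fx]|/BF [n _ Fx]].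
- by exists n.*2.+1 => //=; rewrite odd_double /= uphalf_double.
- by exists n.*2 => //=; rewrite odd_double doubleK.
Qed.

Lemma closure_preimage {S T : topologicalType} (f : S -> T) (A : set T) :
  continuous f -> closure (f @^-1` A) `<=` f @^-1` closure A.
Proof.
move=> cf x clx B /cf /clx [y [Ay By]]; by exists (f y).
Qed.

Section homeomorphism.
Variables (S T : topologicalType) (f : S -> T) (g : T -> S).
Hypotheses (cf : continuous f) (cg : continuous g).
Hypotheses (fK : cancel f g) (gK : cancel g f).

Lemma nowhere_dense_preimage (A : set T) :
  nowhere_dense A -> nowhere_dense (f @^-1` A).
Proof.
move=> ndA; apply/seteqP; split => [x|//]; rewrite /interior /= => clx.
suff : (closure A)° (f x) by rewrite ndA.
have : nbhs (g (f x)) (f @^-1` closure A).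
  by rewrite fK; exact: filterS (closure_preimage _ _ cf) clx.
move=> /(cg (f x)) nbgf; rewrite /interior /=.
have : nbhs (f x) (g @^-1` (f @^-1` closure A)) := nbgf.
by apply: filterS => y /=; rewrite gK.
Qed.

Lemma meagre_preimage (A : set T) : meagre A -> meagre (f @^-1` A).
Proof.
move=> [F [ndF AF]]; exists (fun n => f @^-1` F n); split.
  by move=> n; exact: nowhere_dense_preimage.
by move=> x /AF.
Qed.

End homeomorphism.

Section topological_group.
Variable G : topGroupType.
Hypothesis HG : topological_group G.

Lemma continuous_mulg_invl (g : G) : continuous (fun x : G => x^-1 * g)%g.
Proof.
move=> x; have pair_cont : {for x, continuous (fun y : G => ((y^-1)%g, g))}.
  by apply: cvg_pair; [exact: (proj2 HG) | exact: cvg_cst].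
exact: continuous_comp pair_cont (proj1 HG ((x^-1)%g, g)).
Qed.

Lemma continuous_mulg_invr (g : G) : continuous (fun y : G => g * y^-1)%g.
Proof.
move=> x; have pair_cont : {for x, continuous (fun y : G => (g, (y^-1)%g))}.
  by apply: cvg_pair; [exact: cvg_cst | exact: (proj2 HG)].
exact: continuous_comp pair_cont (proj1 HG (g, (x^-1)%g)).
Qed.

Lemma meagre_preimage_mulg_invl (g : G) (A : set G) :
  meagre A -> meagre [set x | A (x^-1 * g)%g].
Proof.
apply: (@meagre_preimage _ _ _ _ (continuous_mulg_invl g) (continuous_mulg_invr g)).
- by move=> x /=; rewrite invgM invgK mulgA mulgV mul1g.
- by move=> y /=; rewrite invgM invgK -mulgA mulVg mulg1.
Qed.

End topological_group.

Local Open Scope ereal_scope.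

Lemma ge0_lee_addgt0Pr (R : realType) (z x y : \bar R) : 0 <= x -> 0 <= y ->
  (forall e : R, (0 < e)%R -> x \is a fin_num -> y \is a fin_num ->
     z <= x + y + e%:E) -> z <= x + y.
Proof.
case: x => [x| |] //; case: y => [y| |] // _ _ zxy; rewrite ?addye ?addey ?leey //.
by apply/lee_addgt0Pr => e e_gt0; exact: zxy.
Qed.

Lemma le_ereal_infD (R : realType) (z : \bar R) (A B : set (\bar R)) :
  (forall a, A a -> 0 <= a) -> (forall b, B b -> 0 <= b) ->
  (forall a b, A a -> B b -> z <= a + b) ->
  z <= ereal_inf A + ereal_inf B.
Proof.
move=> A_ge0 B_ge0 zAB.
apply: ge0_lee_addgt0Pr; [exact/ereal_infP | exact/ereal_infP |].
move=> e e_gt0 Afin Bfin; have e2_gt0 : (0 < e / 2)%R by rewrite divr_gt0.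
have [a Aa lta] := lb_ereal_inf_adherent e2_gt0 Afin.
have [b Bb ltb] := lb_ereal_inf_adherent e2_gt0 Bfin.
apply: le_trans (zAB a b Aa Bb) (le_trans (leeD (ltW lta) (ltW ltb)) _).
by rewrite -(fineK Afin) -(fineK Bfin) -!EFinD lee_fin; lra.
Qed.

Lemma diamond_le_usc_majorants (R : realType) (G : topGroupType)
    (phi psi p q : G -> \bar R) (g h : G) :
  topological_group G -> completely_metrizable R G ->
  (forall x, 0 <= p x) -> (forall x, 0 <= q x) ->
  upper_semicontinuous p -> upper_semicontinuous q ->
  meagre [set x | p x < phi x] -> meagre [set x | q x < psi x] ->
  diamond phi psi g <= p h + q (h^-1 * g)%g.
Proof.
move=> HG Gmetric p_ge0 q_ge0 p_usc q_usc Mp Mq.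
apply: ge0_lee_addgt0Pr => // e e_gt0 ph_fin qh_fin.
set a := fine (p h); set b := fine (q (h^-1 * g)%g).
pose W := [set x | p x < (a + e / 2)%:E] `&`
          [set x | q (x^-1 * g)%g < (b + e / 2)%:E].
have oW : open W.
  apply: openI; first exact: p_usc.
  by apply: open_comp (q_usc _) => x _; exact: continuous_mulg_invl.
have Wh : W h.
  split => /=.
  - by rewrite -(fineK ph_fin) lte_fin /a; lra.
  - by rewrite -(fineK qh_fin) lte_fin /b; lra.
have [y [py qy] notM] := completely_metrizable_meagre_compl Gmetric
  (meagreU Mp (meagre_preimage_mulg_invl _ HG g _ Mq)) oW Wh.
have phi_y : phi y <= p y by rewrite leNgt; apply/negP => ?; apply: notM; left.
have psi_y : psi (y^-1 * g)%g <= q (y^-1 * g)%g.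
  by rewrite leNgt; apply/negP => ?; apply: notM; right.
have diamond_y : diamond phi psi g <= phi y + psi (y^-1 * g)%g.
  by apply: ereal_inf_lbound; exists y.
apply: le_trans diamond_y (le_trans (leeD (le_trans phi_y (ltW py))
                                           (le_trans psi_y (ltW qy))) _).
by rewrite -(fineK ph_fin) -(fineK qh_fin) -!EFinD lee_fin /a /b; lra.
Qed.

Theorem proposition3p4 (R : realType) (G : topGroupType)
  (HG : polish_group R G) (phi psi : G -> \bar R)
  (Hphi : forall x, 0 <= phi x) (Hpsi : forall x, 0 <= psi x) (g : G) :
  diamond phi psi g <= diamond (Uenv phi) (Uenv psi) g.
Proof.
have [Gtop [_ Gmetric]] := HG.
apply/ereal_infP => _ [h _ <-]; apply: le_ereal_infD.
- by move=> _ [p [p_ge0 _] <-].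
- by move=> _ [q [q_ge0 _] <-].
move=> _ _ [p [p_ge0 [p_usc Mp]] <-] [q [q_ge0 [q_usc Mq]] <-].
exact: diamond_le_usc_majorants.
Qed.
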